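(* For the Lr $(\mathbf a,\tau)$ interval exchange transformation $T$ and its dual $\tilde T$, one has $D\cap T^k(D)=\emptyset$ for all $k\in\mathbb N$ if and only if $D\cap\tilde T^k(D)=\emptyset$ for all $k\in\mathbb N$.
   Context: Fix $n\ge 2$, $[n]=\{1,\dots,n\}$, a vector $\mathbf a=(a_1,\dots,a_n)$ with all $a_i>0$ and $\sum_i a_i=1$, and a permutation $\tau$ of $[n]$. Put $b_0=0$, $b_i=\sum_{j=1}^i a_j$, $J_i=[b_{i-1},b_i)$, $\tilde J_i=(b_{i-1},b_i]$, $D=\{b_1,\dots,b_{n-1}\}$, $b^\tau_0=0$, $b^\tau_i=\sum_{j=1}^i a_{\tau^{-1}(j)}$. $T:[0,1)\to[0,1)$ and $\tilde T:(0,1]\to(0,1]$ are defined by $x\mapsto x-b_{i-1}+b^\tau_{\tau(i)-1}$ for $x\in J_i$ (resp. $x\in\tilde J_i$). *)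

From HB Require Import structures.
From mathcomp Require Import all_boot all_order all_algebra all_fingroup.
From mathcomp Require Import reals.
Set Implicit Arguments. Unset Strict Implicit. Unset Printing Implicit Defensive.
Import Order.TTheory GRing.Theory Num.Theory.
Local Open Scope ring_scope.

(* Indices are 0-based: i : 'I_n corresponds to the paper's i+1. *)
Section IET.
Variables (R : realType) (n : nat) (a : 'I_n -> R) (tau : 'S_n).

Definition bpt (k : nat) : R := \sum_(j < n | (j < k)%N) a j.

Definition btau (k : nat) : R := \sum_(j < n | (j < k)%N) a ((tau^-1)%g j).

Definition inJ (i : 'I_n) (x : R) : bool := (bpt i <= x) && (x < bpt i.+1).
Definition inJt (i : 'I_n) (x : R) : bool := (bpt i < x) && (x <= bpt i.+1).

(* T and tilde T; outside their domains [0,1) resp. (0,1] they are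
   extended by the identity (irrelevant: D lies in (0,1) and both maps
   preserve their domain). *)
Definition iet (x : R) : R :=
  if [pick i | inJ i x] is Some i then x - bpt i + btau (tau i) else x.
Definition iet_dual (x : R) : R :=
  if [pick i | inJt i x] is Some i then x - bpt i + btau (tau i) else x.

Definition Dset (x : R) : Prop := exists k : nat, (1 <= k <= n.-1)%N /\ x = bpt k.

End IET.

From HB Require Import structures.
From mathcomp Require Import all_boot all_order all_algebra all_fingroup.
From mathcomp Require Import reals.
From mathcomp Require Import zify.
From Stdlib Require Import Classical.
Import Order.TTheory GRing.Theory Num.Theory.
Set Implicit Arguments. Unset Strict Implicit.
Local Open Scope ring_scope.

(* Let B = {b_0, ..., b_n} be the set of all break points
   (D together with the endpoints 0 = b_0 and 1 = b_n).  Outside B the maps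
   T and ~T coincide, since J_i and ~J_i differ only at their endpoints.
   Suppose T^k x = y with x, y in D and k > 0.  Cut the orbit at its last
   visit u to B: after T u the orbit stays outside B, so from T u on the
   orbit is also a ~T-orbit.  Now T u is either an endpoint of [0,1]
   (impossible: then T u = y, which is not an endpoint) or a point
   b^tau_q with 0 < q < n, and every such point is reached from D by
   ~T in one or two steps.  Hence some positive ~T-iterate maps D into D.
   The situation is symmetric in T and ~T. *)

Section Iterates.
Variables (T : Type) (f g : T -> T).

Lemma iter_last_visit (B : T -> Prop) (y : T) m w :
  B w -> iter m.+1 f w = y ->
  exists u r, [/\ B u, (forall i, (i < r)%N -> ~ B (iter i f (f u)))
              & iter r f (f u) = y].
Proof.
elim/ltn_ind: m w => m IH w Bw E; rewrite iterSr in E.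
have [[i [lt_im Bi]] | no_visit] :=
  classic (exists i, (i < m)%N /\ B (iter i f (f w))).
- apply: (IH (m - i.+1)%N _ _ Bi); first by lia.
  by rewrite -iterD; have -> : ((m - i.+1).+1 + i = m)%N by lia.
- exists w, m; split=> // i lt_im Bi; apply: no_visit; exists i; auto.
Qed.

Lemma iter_eq_off (B : T -> Prop) :
  (forall x, ~ B x -> f x = g x) -> forall r v,
  (forall i, (i < r)%N -> ~ B (iter i f v)) -> iter r g v = iter r f v.
Proof.
move=> fg; elim=> [//| r IH] v avoid /=.
rewrite IH => [|i lt_ir]; last by apply: avoid; lia.
by symmetry; apply: fg; apply: avoid; lia.
Qed.

Definition reaches (D : T -> Prop) (z : T) : Prop :=
  exists x s, [/\ D x, (0 < s)%N & iter s g x = z].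

Lemma no_return_transfer (B D : T -> Prop) :
  (forall x, D x -> B x) ->
  (forall x, ~ B x -> f x = g x) ->
  (forall u, B u -> (B (f u) /\ ~ D (f u)) \/ reaches D (f u)) ->
  (forall k, (0 < k)%N -> forall x y, D x -> D y -> iter k g x <> y) ->
  (forall k, (0 < k)%N -> forall x y, D x -> D y -> iter k f x <> y).
Proof.
move=> DB fg step no_ret [//|m] _ x y Dx Dy E.
have [u [r [Bu avoid Eu]]] := iter_last_visit (DB _ Dx) E.
case: (step u Bu) => [[Bfu nDfu] | [x' [s [Dx' s_gt0 Es]]]].
- case: r avoid Eu => [|r] avoid Eu; last by case: (avoid 0%N).
  by apply: nDfu; move: Dy; rewrite -Eu.
- apply: (no_ret (r + s)%N _ x' y Dx' Dy); first by lia.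
  by rewrite iterD Es (iter_eq_off fg avoid).
Qed.

End Iterates.

Section PartialSums.
Variables (R : realType) (n : nat) (w : 'I_n -> R).

Lemma bpt0 : bpt w 0 = 0.
Proof. by rewrite /bpt big_pred0 // => j; rewrite ltn0. Qed.

Lemma bptS (j : 'I_n) : bpt w j.+1 = bpt w j + w j.
Proof.
rewrite /bpt (bigD1 j) //= addrC; congr (_ + _); apply: eq_bigl => k.
by rewrite ltnS [(k < j)%N]ltn_neqAle andbC.
Qed.

Lemma bpt_n : bpt w n = \sum_i w i.
Proof. by apply: eq_bigl => j; rewrite ltn_ord. Qed.

Lemma bpt_le (w_ge0 : forall i, 0 <= w i) k1 k2 :
  (k1 <= k2)%N -> bpt w k1 <= bpt w k2.
Proof.
move=> le_k; rewrite /bpt !(big_mkcond (fun j : 'I_n => (j < _)%N)).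
apply: ler_sum => j _; case: ifP => h1; case: ifP => h2 //.
by move: h2; rewrite (leq_trans h1 le_k).
Qed.

End PartialSums.

Section BreakPoints.
Variables (R : realType) (n : nat) (a : 'I_n -> R) (tau : 'S_n).
Hypothesis a_gt0 : forall i, 0 < a i.

Local Notation b := (bpt a).
Local Notation bt := (btau a tau).
Local Notation T := (iet a tau).
Local Notation Td := (iet_dual a tau).

Lemma bpt_lt i j : (i < j)%N -> (j <= n)%N -> b i < b j.
Proof.
move=> lt_ij le_jn; have lt_in : (i < n)%N by lia.
have := bpt_le (fun k => ltW (a_gt0 k)) lt_ij.
rewrite (bptS a (Ordinal lt_in)) /=; apply: lt_le_trans.
by rewrite ltrDl.
Qed.

Lemma bpt_le_iff i j : (i <= n)%N -> (j <= n)%N -> (b i <= b j) = (i <= j)%N.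
Proof.
move=> le_in le_jn; case: leqP => h; first by rewrite (bpt_le (fun k => ltW (a_gt0 k)) h).
by apply: negbTE; rewrite -ltNge bpt_lt.
Qed.

Lemma bpt_lt_iff i j : (i <= n)%N -> (j <= n)%N -> (b i < b j) = (i < j)%N.
Proof. by move=> le_in le_jn; rewrite ltNge bpt_le_iff // ltnNge. Qed.

Lemma bpt_inj i j : (i <= n)%N -> (j <= n)%N -> b i = b j -> i = j.
Proof.
move=> le_in le_jn e; apply/eqP.
by rewrite eqn_leq -(bpt_le_iff le_in le_jn) -(bpt_le_iff le_jn le_in) e lexx.
Qed.

(* btau is the partial-sum function of the permuted lengths a o tau^-1. *)
Lemma btauS (i : 'I_n) : bt (tau i).+1 = bt (tau i) + a i.
Proof. by have := bptS (fun j => a ((tau^-1)%g j)) (tau i); rewrite /= permK. Qed.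

Lemma btau0 : bt 0 = b 0.
Proof. by rewrite bpt0 /btau big_pred0 // => j; rewrite ltn0. Qed.

Lemma btau_n : bt n = b n.
Proof.
have -> : bt n = bpt (fun j => a ((tau^-1)%g j)) n by [].
by rewrite !bpt_n [RHS](reindex_inj (@perm_inj _ (tau^-1)%g)).
Qed.

Lemma iet_bpt (i : 'I_n) : T (b i) = bt (tau i).
Proof.
have lt_in := ltn_ord i; rewrite /iet; case: pickP => [j | no_pick].
- move=> inJj; have lt_jn := ltn_ord j.
  have -> : j = i.
    by apply: ord_inj; move: inJj; rewrite /inJ bpt_le_iff ?bpt_lt_iff; lia.
  by rewrite subrr add0r.
- by have := no_pick i; rewrite /inJ lexx bpt_lt_iff; lia.
Qed.

Lemma iet_dual_bpt (i : 'I_n) : Td (b i.+1) = bt (tau i).+1.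
Proof.
have lt_in := ltn_ord i; rewrite /iet_dual; case: pickP => [j | no_pick].
- move=> inJj; have lt_jn := ltn_ord j.
  have -> : j = i.
    by apply: ord_inj; move: inJj; rewrite /inJt bpt_le_iff ?bpt_lt_iff; lia.
  by rewrite bptS btauS [b i + a i]addrC addrK addrC.
- by have := no_pick i; rewrite /inJt lexx andbT bpt_lt_iff; lia.
Qed.

(* The endpoints 1 and 0 lie outside the domains of T and ~T respectively. *)
Lemma iet_bpt_n : T (b n) = b n.
Proof.
rewrite /iet; case: pickP => [j inJj | //]; have lt_jn := ltn_ord j.
by move: inJj; rewrite /inJ bpt_le_iff ?bpt_lt_iff; lia.
Qed.

Lemma iet_dual_bpt0 : Td (b 0) = b 0.
Proof.
rewrite /iet_dual; case: pickP => [j inJj | //]; have lt_jn := ltn_ord j.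
by move: inJj; rewrite /inJt bpt_le_iff ?bpt_lt_iff; lia.
Qed.

Definition Bset (x : R) : Prop := exists k, (k <= n)%N /\ x = b k.

Lemma Dset_Bset x : Dset a x -> Bset x.
Proof. by case=> k [hk ->]; exists k; split=> //; lia. Qed.

Lemma Bset_bpt k : (k <= n)%N -> Bset (b k).
Proof. by exists k. Qed.

Lemma notD_bpt0 : ~ Dset a (b 0).
Proof. by case=> k [hk /bpt_inj]; lia. Qed.

Lemma notD_bpt_n : ~ Dset a (b n).
Proof. by case=> k [hk /bpt_inj]; lia. Qed.

(* J_i and ~J_i differ only at break points, so T = ~T off B. *)
Lemma iet_eq_off x : ~ Bset x -> T x = Td x.
Proof.
move=> nBx; rewrite /iet /iet_dual (@eq_pick _ _ (fun i => inJt a i x)) //.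
move=> j /=; have lt_jn := ltn_ord j.
have left_ne : (b j == x) = false.
  by apply/negbTE/eqP => e; apply: nBx; exists j; split; [lia | rewrite e].
have right_ne : (x == b j.+1) = false.
  by apply/negbTE/eqP => e; apply: nBx; exists j.+1; split; [lia | rewrite e].
by rewrite /inJ /inJt [b j <= x]le_eqVlt [x <= b j.+1]le_eqVlt left_ne right_ne.
Qed.

(* Every interior point b^tau_q, 0 < q < n, is reached from D by ~T:
   it is ~T(b_{i+1}) for i = tau^-1(q-1), and if b_{i+1} = b_n is not in D,
   then b_n = b^tau_n is itself ~T(b_{i'+1}) with i' = tau^-1(n-1) < n-1. *)
Lemma reaches_dual q : (0 < q)%N -> (q < n)%N -> reaches Td (Dset a) (bt q).
Proof.
move=> q_gt0 lt_qn; have lt_q1n : (q.-1 < n)%N by lia.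
set i := (tau^-1 (Ordinal lt_q1n))%g.
have tau_i : tau i = Ordinal lt_q1n by rewrite /i permKV.
have Td_i : Td (b i.+1) = bt q by rewrite iet_dual_bpt tau_i /=; congr bt; lia.
have lt_in := ltn_ord i.
case: (ltnP i.+1 n) => [lt_i1n | le_ni1].
  by exists (b i.+1), 1%N; split=> //; exists i.+1; split=> //; lia.
have lt_n1n : (n.-1 < n)%N by lia.
set i' := (tau^-1 (Ordinal lt_n1n))%g.
have tau_i' : tau i' = Ordinal lt_n1n by rewrite /i' permKV.
have neq_i : (i' : nat) <> i.
  by move=> /val_inj e; move: tau_i; rewrite -e tau_i' => /(congr1 val) /=; lia.
have lt_i'n := ltn_ord i'.
exists (b i'.+1), 2%N; split=> //; first by exists i'.+1; split=> //; lia.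
rewrite /= iet_dual_bpt tau_i' /=.
have -> : n.-1.+1 = n by lia.
by rewrite btau_n -Td_i; congr (Td (b _)); lia.
Qed.

(* Symmetrically, b^tau_q = T(b_i) for i = tau^-1(q), and if b_i = b_0 is not
   in D, then b_0 = b^tau_0 = T(b_{i'}) with i' = tau^-1(0) > 0. *)
Lemma reaches_iet q : (0 < q)%N -> (q < n)%N -> reaches T (Dset a) (bt q).
Proof.
move=> q_gt0 lt_qn; set i := (tau^-1 (Ordinal lt_qn))%g.
have tau_i : tau i = Ordinal lt_qn by rewrite /i permKV.
have T_i : T (b i) = bt q by rewrite iet_bpt tau_i.
have lt_in := ltn_ord i.
case: (posnP i) => [i0 | i_gt0].
  have n_gt0 : (0 < n)%N by lia.
  set i' := (tau^-1 (Ordinal n_gt0))%g.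
  have tau_i' : tau i' = Ordinal n_gt0 by rewrite /i' permKV.
  have i'_gt0 : (0 < i')%N.
    rewrite lt0n; apply/eqP => e; have e' : i' = i by apply: val_inj; rewrite /= e i0.
    by move: tau_i; rewrite -e' tau_i' => /(congr1 val) /=; lia.
  have lt_i'n := ltn_ord i'.
  exists (b i'), 2%N; split=> //; first by exists i'; split=> //; lia.
  by rewrite /= iet_bpt tau_i' /= btau0 -i0.
by exists (b i), 1%N; split=> //; exists i; split=> //; lia.
Qed.

Lemma iet_break_step u : Bset u ->
  (Bset (T u) /\ ~ Dset a (T u)) \/ reaches Td (Dset a) (T u).
Proof.
case=> j [le_jn ->]; case: (ltnP j n) => [lt_jn | le_nj].
- have := iet_bpt (Ordinal lt_jn) => /= ->.
  case: (posnP (tau (Ordinal lt_jn))) => [-> | tau_gt0].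
    by left; rewrite btau0; split; [exact: Bset_bpt | exact: notD_bpt0].
  by right; exact: reaches_dual.
- have -> : j = n by lia.
  by left; rewrite iet_bpt_n; split; [exact: Bset_bpt | exact: notD_bpt_n].
Qed.

Lemma iet_dual_break_step u : Bset u ->
  (Bset (Td u) /\ ~ Dset a (Td u)) \/ reaches T (Dset a) (Td u).
Proof.
case=> [[|j]] [le_jn ->].
  by left; rewrite iet_dual_bpt0; split; [exact: Bset_bpt | exact: notD_bpt0].
have lt_jn : (j < n)%N by lia.
have := iet_dual_bpt (Ordinal lt_jn) => /= ->.
case: (ltnP (tau (Ordinal lt_jn)).+1 n) => [lt_n | le_n].
  by right; exact: reaches_iet.
have -> : (tau (Ordinal lt_jn)).+1 = n by have := ltn_ord (tau (Ordinal lt_jn)); lia.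
by left; rewrite btau_n; split; [exact: Bset_bpt | exact: notD_bpt_n].
Qed.

End BreakPoints.

Theorem lemma3p3 (R : realType) (n : nat) (a : 'I_n -> R) (tau : 'S_n) :
  (2 <= n)%N ->
  (forall i, 0 < a i) ->
  \sum_(i < n) a i = 1 ->
  (forall k : nat, (0 < k)%N -> forall x y,
      Dset a x -> Dset a y -> iter k (iet a tau) x <> y)
  <->
  (forall k : nat, (0 < k)%N -> forall x y,
      Dset a x -> Dset a y -> iter k (iet_dual a tau) x <> y).
Proof.
move=> _ a_gt0 _; split.
- apply: (no_return_transfer (B := Bset a)); first exact: Dset_Bset.
    by move=> x /iet_eq_off ->.
  exact: iet_dual_break_step.
- apply: (no_return_transfer (B := Bset a)); first exact: Dset_Bset.
    exact: iet_eq_off.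
  exact: iet_break_step.
Qed.
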